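(* If $t\in\mathtt T_J$ is typable in $\cap J$ (i.e. $\Gamma\vdash t:\sigma$ for some $\Gamma,\sigma$), then $t$ is strongly normalizing for $\to_\beta\cup\to_\pi$.
   Context: Terms $\mathtt T_J$: $t,u,r ::= x \mid \lambda x.t \mid t(u,y.r)$ ($y$ bound in $r$), up to $\alpha$-equivalence; $\{u/x\}t$ capture-avoiding substitution. Rules of $\Lambda J$: $\beta$: $(\lambda x.t)(u,y.r)\mapsto\{\{u/x\}t/y\}r$; $\pi$: $t(u,x.r)(u',y.r')\mapsto t(u,x.r(u',y.r'))$ (with $x\notin\mathrm{fv}(u')\cup\mathrm{fv}(r')$); $\to_\beta,\to_\pi$ their closures under all contexts. System $\cap J$: types $\sigma,\tau ::= \alpha \mid \mathcal M\to\sigma$, $\mathcal M=[\sigma_i]_{i\in I}$ a finite possibly empty multiset; $\sqcup$ multiset union; environments map variables to multisets, $\wedge$ pointwise union, $\Gamma;x:\mathcal M$ extension with $x\notin\mathrm{dom}\,\Gamma$. $\mathrm{ch}(\mathcal M)=\mathcal M$ if $\mathcal M\ne[\,]$, $\mathrm{ch}([\,])=[\tau]$ for an arbitrary $\tau$. Rules: (var) $x:[\sigma]\vdash x:\sigma$; (abs) from $\Gamma;x:\mathcal M\vdash t:\sigma$ infer $\Gamma\vdash\lambda x.t:\mathcal M\to\sigma$; (many) from $(\Gamma_i\vdash t:\sigma_i)_{i\in I}$, $I\ne\emptyset$, infer $\wedge_i\Gamma_i\vdash t:[\sigma_i]_{i\in I}$; (app) from $\Gamma\vdash t:\mathrm{ch}([\mathcal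 M_i\to\tau_i]_{i\in I})$, $\Delta\vdash u:\mathrm{ch}(\sqcup_i\mathcal M_i)$, $\Lambda;y:[\tau_i]_{i\in I}\vdash r:\sigma$ infer $\Gamma\wedge\Delta\wedge\Lambda\vdash t(u,y.r):\sigma$. *)

(* Terms of Lambda J with de Bruijn indices (alpha-equivalence
   built in), reductions ->beta, ->pi, and the non-idempotent intersection
   type system cap J, with multisets represented as lists up to permutation. *)
From Stdlib Require Import List Arith Permutation.
Import ListNotations.

(* Var n | Lam t (binds 0 in t) | App t u r  = t(u, y.r), binds 0 in r *)
Inductive tm : Type :=
| Var : nat -> tm
| Lam : tm -> tm
| App : tm -> tm -> tm -> tm.

Fixpoint lift (k c : nat) (t : tm) : tm :=
  match t with
  | Var m => if m <? c then Var m else Var (m + k)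
  | Lam t1 => Lam (lift k (S c) t1)
  | App t1 t2 r => App (lift k c t1) (lift k c t2) (lift k (S c) r)
  end.

Fixpoint subst (n : nat) (u : tm) (t : tm) : tm :=
  match t with
  | Var m => if m <? n then Var m
             else if m =? n then lift n 0 u
             else Var (m - 1)
  | Lam t1 => Lam (subst (S n) u t1)
  | App t1 t2 r => App (subst n u t1) (subst n u t2) (subst (S n) u r)
  end.

Inductive step : tm -> tm -> Prop :=
| step_beta : forall t u r,
    (* (\x.t)(u, y.r) |-> {{u/x}t / y} r *)
    step (App (Lam t) u r) (subst 0 (subst 0 u t) r)
| step_pi : forall t u r u' r',
    (* t(u,x.r)(u',y.r') |-> t(u, x.r(u',y.r')), x fresh for u', r' *)
    step (App (App t u r) u' r') (App t u (App r (lift 1 0 u') (lift 1 1 r')))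
| step_lam : forall t t', step t t' -> step (Lam t) (Lam t')
| step_app1 : forall t t' u r, step t t' -> step (App t u r) (App t' u r)
| step_app2 : forall t u u' r, step u u' -> step (App t u r) (App t u' r)
| step_app3 : forall t u r r', step r r' -> step (App t u r) (App t u r').

Definition SN (t : tm) : Prop := Acc (fun b a => step a b) t.

Inductive ty : Type :=
| TVar : nat -> ty
| Arr : list ty -> ty -> ty.

Definition mty := list ty.

Inductive ty_eqv : ty -> ty -> Prop :=
| eqv_tvar : forall a, ty_eqv (TVar a) (TVar a)
| eqv_arr : forall M N M' s s',
    Permutation M N -> Forall2 ty_eqv N M' -> ty_eqv s s' ->
    ty_eqv (Arr M s) (Arr M' s').

Definition mty_eqv (M M' : mty) : Prop :=
  exists N, Permutation M N /\ Forall2 ty_eqv N M'.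

(* environments: total maps, x notin dom G iff G x = [] *)
Definition env := nat -> mty.
Definition env_eqv (G G' : env) : Prop := forall x, mty_eqv (G x) (G' x).
Definition env_union (G D : env) : env := fun x => G x ++ D x.
Definition env_single (x : nat) (s : ty) : env :=
  fun y => if y =? x then [s] else [].
(* G ; 0 : M  (the bound variable 0 is fresh for the shifted G) *)
Definition env_ext (M : mty) (G : env) : env :=
  fun y => match y with 0 => M | S y' => G y' end.

Definition is_ch (M N : mty) : Prop :=
  (M <> [] /\ N = M) \/ (M = [] /\ exists tau, N = [tau]).

Inductive typ : env -> tm -> ty -> Prop :=
| typ_var : forall x s, typ (env_single x s) (Var x) s
| typ_abs : forall G M t s, typ (env_ext M G) t s -> typ G (Lam t) (Arr M s)
| typ_app : forall (G D L : env) t u r s (As : list (mty * ty)) Mt Mu,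
    (* As = [(M_i, tau_i)]_{i in I} *)
    is_ch (map (fun p => Arr (fst p) (snd p)) As) Mt ->
    typm G t Mt ->
    is_ch (concat (map fst As)) Mu ->
    typm D u Mu ->
    typ (env_ext (map snd As) L) r s ->
    typ (env_union G (env_union D L)) (App t u r) s
(* judgments are taken up to multiset equality *)
| typ_conv : forall G G' t s s',
    typ G t s -> env_eqv G G' -> ty_eqv s s' -> typ G' t s'
with typm : env -> tm -> mty -> Prop :=
(* rule (many), with nonempty I, built one premise at a time *)
| typm_one : forall G t s, typ G t s -> typm G t [s]
| typm_cons : forall G D t s M,
    typ G t s -> typm D t M -> typm (env_union G D) t (s :: M)
| typm_conv : forall G G' t M M',
    typm G t M -> env_eqv G G' -> mty_eqv M M' -> typm G' t M'.

(* Derivations in cap J are non-idempotent: an argument is typed once for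
   each use of the bound variable, so substitution needs no duplication of
   derivations and a beta-step strictly decreases the size of a typing
   derivation. A pi-step only regroups the premises of the two application
   rules, so it does not increase the size; it does decrease the weight of the
   term when the head of an application is counted twice. Every step thus
   decreases (size, weight) lexicographically, which is well founded. *)

From Stdlib Require Import List Arith Permutation Lia ClassicalEpsilon FunctionalExtensionality.
Import ListNotations.
Set Implicit Arguments.

Definition ty_nested_ind (P : ty -> Prop) (HV : forall a, P (TVar a))
  (HA : forall M s, Forall P M -> P s -> P (Arr M s)) : forall s, P s :=
  fix F s := match s with
  | TVar a => HV a
  | Arr M s' => HA M s' ((fix FM (l : list ty) : Forall P l :=
      match l with
      | [] => Forall_nil P
      | x :: l' => Forall_cons x (F x) (FM l')
      end) M) (F s')
  end.

Lemma Forall2_Permutation_r {A B} (R : A -> B -> Prop) l1 l2 l3 :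
  Forall2 R l1 l2 -> Permutation l2 l3 ->
  exists l1', Permutation l1 l1' /\ Forall2 R l1' l3.
Proof.
  intros HR HP.
  destruct (Permutation_Forall2 HP (Forall2_flip HR)) as (l1' & HP' & HR').
  exists l1'. split; [exact HP'|exact (Forall2_flip HR')].
Qed.

Lemma ty_eqv_refl : forall s, ty_eqv s s.
Proof.
  apply ty_nested_ind; [constructor|].
  intros M s HM Hs. apply eqv_arr with M; [reflexivity| |exact Hs].
  induction HM; constructor; auto.
Qed.

Lemma ty_eqv_sym : forall s s', ty_eqv s s' -> ty_eqv s' s.
Proof.
  apply (ty_nested_ind (P := fun s => forall s', ty_eqv s s' -> ty_eqv s' s)).
  - intros a s' H. inversion H. constructor.
  - intros M s HM Hs s' H. inversion H as [|M0 N M' s0 s'' HP HF Hss]; subst.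
    assert (HN : Forall (fun a => forall b, ty_eqv a b -> ty_eqv b a) N)
      by exact (Permutation_Forall HP HM).
    assert (HF' : Forall2 ty_eqv M' N).
    { clear - HF HN. induction HF; inversion HN; constructor; auto. }
    destruct (Forall2_Permutation_r HF' (Permutation_sym HP)) as (Z & HZ & HFZ).
    econstructor; eauto.
Qed.

Lemma ty_eqv_trans : forall s1 s2 s3, ty_eqv s1 s2 -> ty_eqv s2 s3 -> ty_eqv s1 s3.
Proof.
  apply (ty_nested_ind
    (P := fun s1 => forall s2 s3, ty_eqv s1 s2 -> ty_eqv s2 s3 -> ty_eqv s1 s3)).
  - intros a s2 s3 H12 H23. inversion H12; subst. exact H23.
  - intros M s HM Hs s2 s3 H12 H23.
    inversion H12 as [|M0 N M' s0 s' HP HF Hss']; subst.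
    inversion H23 as [|M0 N1 M'' s0 s'' HP1 HF1 Hs's'']; subst.
    destruct (Forall2_Permutation_r HF HP1) as (Z & HZ & HFZ).
    assert (HMZ : Forall (fun a => forall b c, ty_eqv a b -> ty_eqv b c -> ty_eqv a c) Z)
      by exact (Permutation_Forall (perm_trans HP HZ) HM).
    econstructor; [exact (perm_trans HP HZ)| |eauto].
    clear - HFZ HF1 HMZ. revert M'' HF1.
    induction HFZ; intros M'' HF1; inversion HF1; inversion HMZ; subst; constructor; eauto.
Qed.

(* Multiplicity of [a] in [M] up to [ty_eqv]: multiset inclusions between
   environments become linear arithmetic on these counts. *)
Definition eqv_dec (a b : ty) : {ty_eqv a b} + {~ ty_eqv a b} :=
  excluded_middle_informative _.

Fixpoint mult (a : ty) (M : mty) : nat :=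
  match M with
  | [] => 0
  | b :: M' => (if eqv_dec a b then 1 else 0) + mult a M'
  end.

Lemma mult_app a M N : mult a (M ++ N) = mult a M + mult a N.
Proof. induction M as [|b M IH]; simpl; [reflexivity|]. rewrite IH. lia. Qed.

Lemma mult_perm a M N : Permutation M N -> mult a M = mult a N.
Proof. induction 1; simpl; lia. Qed.

Lemma mult_Forall2 a M N : Forall2 ty_eqv M N -> mult a M = mult a N.
Proof.
  induction 1 as [|b c M N Hbc _ IH]; simpl; [reflexivity|]. rewrite IH.
  destruct (eqv_dec a b), (eqv_dec a c); try reflexivity; exfalso.
  - eauto using ty_eqv_trans.
  - eauto using ty_eqv_trans, ty_eqv_sym.
Qed.

Lemma mty_eqv_mult M N : mty_eqv M N -> forall a, mult a M = mult a N.
Proof.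
  intros (Z & HP & HF) a. rewrite (mult_perm a HP). exact (mult_Forall2 a HF).
Qed.

Lemma mult_self_pos a M : 0 < mult a (a :: M).
Proof. simpl. destruct (eqv_dec a a) as [_|Hn]; [lia|elim Hn; apply ty_eqv_refl]. Qed.

Lemma mult_pos_split a N : 0 < mult a N -> exists N1 c N2, N = N1 ++ c :: N2 /\ ty_eqv a c.
Proof.
  induction N as [|c N IH]; simpl; intro H; [lia|].
  destruct (eqv_dec a c) as [Hac|Hac].
  - exists [], c, N. auto.
  - destruct (IH H) as (N1 & c' & N2 & -> & Hac'). exists (c :: N1), c', N2. auto.
Qed.

Definition env_le (G G' : env) : Prop := forall x a, mult a (G x) <= mult a (G' x).

Ltac env_lia :=
  unfold env_le; let x := fresh "x" in let a := fresh "a" in intros x a;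
  repeat match goal with H : env_le _ _ |- _ => specialize (H x a) end;
  unfold env_union in *; rewrite ?mult_app in *; simpl mult in *; lia.

Lemma env_le_refl G : env_le G G.
Proof. env_lia. Qed.

Lemma env_eqv_le G G' : env_eqv G G' -> env_le G G'.
Proof. intros H x a. rewrite (mty_eqv_mult (H x)). lia. Qed.

Lemma env_ext_le M M' G G' :
  (forall a, mult a M <= mult a M') -> env_le G G' -> env_le (env_ext M G) (env_ext M' G').
Proof. intros HM HG [|x] a; simpl; auto. Qed.

Definition env_empty : env := fun _ => [].

Definition env_shift (k c : nat) (G : env) : env :=
  fun y => if y <? c then G y else if y <? c + k then [] else G (y - k).

Definition env_drop (k : nat) (G : env) : env :=
  fun y => if y <? k then G y else G (S y).

Ltac index_cases :=
  repeat match goal with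
  | |- context [?a <? ?b] => destruct (Nat.ltb_spec a b)
  | |- context [?a =? ?b] => destruct (Nat.eqb_spec a b)
  end; try reflexivity; try (exfalso; lia).

Lemma env_shift_union k c G H :
  env_shift k c (env_union G H) = env_union (env_shift k c G) (env_shift k c H).
Proof. extensionality y. unfold env_shift, env_union. index_cases. Qed.

Lemma env_shift_ext k c M G :
  env_shift k (S c) (env_ext M G) = env_ext M (env_shift k c G).
Proof.
  extensionality y. destruct y as [|y]; [reflexivity|]. unfold env_shift.
  cbn [env_ext]. index_cases. replace (S y - k) with (S (y - k)) by lia. reflexivity.
Qed.

Lemma env_shift_single k c x s :
  env_shift k c (env_single x s) = env_single (if x <? c then x else x + k) s.
Proof.
  extensionality y. unfold env_shift, env_single. index_cases; f_equal; lia.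
Qed.

Lemma env_shift_0 c G : env_shift 0 c G = G.
Proof. extensionality y. unfold env_shift. index_cases. f_equal. lia. Qed.

Lemma env_shift_S_0 k G : env_shift (S k) 0 G = env_ext [] (env_shift k 0 G).
Proof. extensionality y. destruct y as [|y]; reflexivity. Qed.

Lemma env_shift_le k c G G' : env_le G G' -> env_le (env_shift k c G) (env_shift k c G').
Proof. intros H x a. unfold env_shift. index_cases; auto. Qed.

Lemma env_drop_union k G H :
  env_drop k (env_union G H) = env_union (env_drop k G) (env_drop k H).
Proof. extensionality y. unfold env_drop, env_union. index_cases. Qed.

Lemma env_drop_ext k M G : env_drop (S k) (env_ext M G) = env_ext M (env_drop k G).
Proof. extensionality y. destruct y as [|y]; reflexivity. Qed.

Lemma env_drop_0_ext M G : env_drop 0 (env_ext M G) = G.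
Proof. reflexivity. Qed.

Lemma env_drop_single k x s : x <> k ->
  env_drop k (env_single x s) = env_single (if x <? k then x else x - 1) s.
Proof.
  intro Hxk. extensionality y. unfold env_drop, env_single. index_cases; f_equal; lia.
Qed.

Lemma env_drop_le k G G' : env_le G G' -> env_le (env_drop k G) (env_drop k G').
Proof. intros H x a. unfold env_drop. index_cases; auto. Qed.

Lemma env_union_ext X Y G H :
  env_union (env_ext X G) (env_ext Y H) = env_ext (X ++ Y) (env_union G H).
Proof. extensionality y. destruct y as [|y]; reflexivity. Qed.

Lemma env_drop_shift_ext k M G D :
  env_union (env_drop (S k) (env_ext M G)) (env_shift (S k) 0 D)
  = env_ext M (env_union (env_drop k G) (env_shift k 0 D)).
Proof. rewrite env_drop_ext, env_shift_S_0, env_union_ext, app_nil_r. reflexivity. Qed.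

(** * Sized typing, lifting and substitution *)

Definition arrows (As : list (mty * ty)) : mty := map (fun p => Arr (fst p) (snd p)) As.

(* Cap J indexed by the size [n] of the derivation (number of var/abs/app
   rules), with weakening folded into the conversion rule: a beta-step may
   erase an argument typed through ch([]) = [tau], whose environment must then
   be absorbed. Unlike rule (many), [stypm] also types the empty multiset. *)
Inductive styp : env -> tm -> ty -> nat -> Prop :=
| styp_var x s : styp (env_single x s) (Var x) s 1
| styp_abs G M t s n : styp (env_ext M G) t s n -> styp G (Lam t) (Arr M s) (S n)
| styp_app G D L t u r s As Mt Mu n1 n2 n3 :
    is_ch (arrows As) Mt -> stypm G t Mt n1 ->
    is_ch (concat (map fst As)) Mu -> stypm D u Mu n2 ->
    styp (env_ext (map snd As) L) r s n3 ->
    styp (env_union G (env_union D L)) (App t u r) s (S (n1 + n2 + n3))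
| styp_sub G G' t s s' n : styp G t s n -> env_le G G' -> ty_eqv s s' -> styp G' t s' n
with stypm : env -> tm -> mty -> nat -> Prop :=
| stypm_nil G t : stypm G t [] 0
| stypm_cons G G1 G2 t s M n1 n2 :
    styp G1 t s n1 -> stypm G2 t M n2 -> env_le (env_union G1 G2) G ->
    stypm G t (s :: M) (n1 + n2).

Scheme styp_mut := Induction for styp Sort Prop
  with stypm_mut := Induction for stypm Sort Prop.
Combined Scheme styp_stypm_ind from styp_mut, stypm_mut.

Lemma styp_weaken G G' t s n : styp G t s n -> env_le G G' -> styp G' t s n.
Proof. intros H HG. exact (styp_sub H HG (ty_eqv_refl s)). Qed.

Lemma styp_conv G t s s' n : styp G t s n -> ty_eqv s s' -> styp G t s' n.
Proof. intros H Hs. exact (styp_sub H (env_le_refl G) Hs). Qed.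

Lemma stypm_weaken G G' t M n : stypm G t M n -> env_le G G' -> stypm G' t M n.
Proof.
  intros [|? G1 G2 ? s M' n1 n2 H1 H2 Hle] HG; econstructor; eauto. env_lia.
Qed.

Lemma stypm_nil_inv G t n : stypm G t [] n -> n = 0.
Proof. inversion 1. reflexivity. Qed.

Lemma stypm_cons_inv G t s M n : stypm G t (s :: M) n ->
  exists G1 G2 n1 n2, styp G1 t s n1 /\ stypm G2 t M n2 /\
    env_le (env_union G1 G2) G /\ n = n1 + n2.
Proof. inversion 1; subst. eauto 8. Qed.

Lemma stypm_one G t s n : styp G t s n -> stypm G t [s] n.
Proof.
  intro H. rewrite <- (Nat.add_0_r n).
  apply stypm_cons with G env_empty; [exact H|constructor|]. unfold env_empty. env_lia.
Qed.

Lemma stypm_one_inv G t s n : stypm G t [s] n -> styp G t s n.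
Proof.
  intro H. destruct (stypm_cons_inv H) as (G1 & G2 & n1 & n2 & H1 & H2 & Hle & ->).
  rewrite (stypm_nil_inv H2), Nat.add_0_r. apply (styp_weaken H1). env_lia.
Qed.

Lemma stypm_app G1 G2 t A B n1 n2 :
  stypm G1 t A n1 -> stypm G2 t B n2 -> stypm (env_union G1 G2) t (A ++ B) (n1 + n2).
Proof.
  intro HA. revert G2 B n2.
  induction HA as [G t|G G1' G2' t s M m1 m2 H1 H2 IH Hle]; intros G' B n' HB; simpl.
  - apply (stypm_weaken HB). env_lia.
  - rewrite <- Nat.add_assoc. econstructor; [exact H1|exact (IH _ _ _ HB)|]. env_lia.
Qed.

Lemma stypm_app_inv {A B} D u m : stypm D u (A ++ B) m ->
  exists D1 D2 m1 m2, stypm D1 u A m1 /\ stypm D2 u B m2 /\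
    env_le (env_union D1 D2) D /\ m = m1 + m2.
Proof.
  revert D m. induction A as [|a A IH]; intros D m H; simpl in H.
  - exists env_empty, D, 0, m. repeat split; [constructor|exact H|]. unfold env_empty. env_lia.
  - destruct (stypm_cons_inv H) as (G1 & G2 & n1 & n2 & H1 & H2 & Hle & ->).
    destruct (IH _ _ H2) as (D1 & D2 & m1 & m2 & HA & HB & Hle' & ->).
    exists (env_union G1 D1), D2, (n1 + m1), m2. repeat split.
    + econstructor; [exact H1|exact HA|apply env_le_refl].
    + exact HB.
    + env_lia.
    + lia.
Qed.

Lemma stypm_submset M : forall N D u m, stypm D u N m ->
  (forall a, mult a M <= mult a N) -> exists m', m' <= m /\ stypm D u M m'.
Proof.
  induction M as [|b M IH]; intros N D u m HN Hle.
  - exists 0. split; [lia|constructor].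
  - assert (Hb : 0 < mult b N) by (pose proof (mult_self_pos b M); specialize (Hle b); lia).
    destruct (mult_pos_split b N Hb) as (N1 & c & N2 & -> & Hbc).
    destruct (stypm_app_inv HN) as (D1 & D2 & m1 & m2 & H1 & H2 & HD & ->).
    destruct (stypm_cons_inv H2) as (Dc & D3 & mc & m3 & Hc & H3 & HD2 & ->).
    destruct (IH (N1 ++ N2) (env_union D1 D3) u (m1 + m3) (stypm_app H1 H3))
      as (m' & Hm' & HM).
    { intro a. specialize (Hle a).
      pose proof (mult_Forall2 a (Forall2_cons _ _ Hbc (Forall2_nil _))).
      rewrite !mult_app in *. simpl in *. lia. }
    exists (mc + m'). split; [lia|].
    econstructor; [exact (styp_conv Hc (ty_eqv_sym Hbc))|exact HM|]. env_lia.
Qed.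

Lemma styp_stypm_lift :
  (forall G t s n, styp G t s n -> forall k c, styp (env_shift k c G) (lift k c t) s n) /\
  (forall G t M n, stypm G t M n -> forall k c, stypm (env_shift k c G) (lift k c t) M n).
Proof.
  apply styp_stypm_ind; intros; simpl.
  - rewrite env_shift_single. destruct (x <? c); constructor.
  - constructor. rewrite <- env_shift_ext. auto.
  - rewrite !env_shift_union. econstructor; eauto. rewrite <- env_shift_ext. auto.
  - eapply styp_sub; eauto using env_shift_le.
  - constructor.
  - econstructor; eauto. rewrite <- env_shift_union. auto using env_shift_le.
Qed.

Lemma styp_lift k c G t s n : styp G t s n -> styp (env_shift k c G) (lift k c t) s n.
Proof. intro H. exact (proj1 styp_stypm_lift _ _ _ _ H k c). Qed.

Lemma stypm_lift k c G t M n : stypm G t M n -> stypm (env_shift k c G) (lift k c t) M n.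
Proof. intro H. exact (proj2 styp_stypm_lift _ _ _ _ H k c). Qed.

Lemma subst_Var_neq k u x : x <> k -> subst k u (Var x) = Var (if x <? k then x else x - 1).
Proof. intro Hxk. simpl. index_cases. Qed.

Lemma styp_subst_Var u x s k D m : stypm D u (env_single x s k) m ->
  exists n', n' <= 1 + m /\
    styp (env_union (env_drop k (env_single x s)) (env_shift k 0 D)) (subst k u (Var x)) s n'.
Proof.
  intro HD. unfold env_single at 1 in HD. destruct (Nat.eq_dec x k) as [->|Hxk].
  - rewrite Nat.eqb_refl in HD.
    exists m. split; [lia|]. simpl. rewrite Nat.ltb_irrefl, Nat.eqb_refl.
    apply (styp_weaken (styp_lift k 0 (stypm_one_inv HD))).
    env_lia.
  - exists 1. split; [lia|].
    rewrite subst_Var_neq, env_drop_single by exact Hxk.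
    apply (styp_weaken (styp_var _ s)). env_lia.
Qed.

Lemma styp_stypm_subst u :
  (forall G t s n, styp G t s n -> forall k D m, stypm D u (G k) m ->
     exists n', n' <= n + m /\
       styp (env_union (env_drop k G) (env_shift k 0 D)) (subst k u t) s n') /\
  (forall G t M n, stypm G t M n -> forall k D m, stypm D u (G k) m ->
     exists n', n' <= n + m /\
       stypm (env_union (env_drop k G) (env_shift k 0 D)) (subst k u t) M n').
Proof.
  apply styp_stypm_ind.
  - intros x s k D m HD. exact (styp_subst_Var x s k HD).
  - intros G M t s n _ IH k D m HD.
    destruct (IH (S k) D m HD) as (n' & Hn & H).
    exists (S n'). split; [lia|]. simpl. constructor. rewrite <- env_drop_shift_ext. exact H.
  - intros G D1 L t1 u1 r s As Mt Mu n1 n2 n3 Hch1 _ IH1 Hch2 _ IH2 _ IH3 k D m HD.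
    destruct (stypm_app_inv HD) as (Da & Dbc & ma & mbc & Ha & Hbc & HD1 & ->).
    destruct (stypm_app_inv Hbc) as (Db & Dc & mb & mc & Hb & Hc & HD2 & ->).
    destruct (IH1 k Da ma Ha) as (n1' & Hn1 & H1).
    destruct (IH2 k Db mb Hb) as (n2' & Hn2 & H2).
    destruct (IH3 (S k) Dc mc Hc) as (n3' & Hn3 & H3).
    rewrite env_drop_shift_ext in H3.
    exists (S (n1' + n2' + n3')). split; [lia|]. simpl.
    apply (styp_weaken (styp_app As Hch1 H1 Hch2 H2 H3)).
    pose proof (env_shift_le k 0 HD1) as HS1. pose proof (env_shift_le k 0 HD2) as HS2.
    rewrite env_shift_union in HS1, HS2. rewrite !env_drop_union. env_lia.
  - intros G G' t s s' n _ IH HG Hs k D m HD.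
    destruct (stypm_submset (G k) HD (HG k)) as (m' & Hm & HD').
    destruct (IH k D m' HD') as (n' & Hn & H).
    exists n'. split; [lia|]. apply (styp_sub H); [|exact Hs].
    pose proof (env_drop_le k HG). env_lia.
  - intros G t k D m _. exists 0. split; [lia|constructor].
  - intros G G1 G2 t s M n1 n2 _ IH1 _ IH2 HG k D m HD.
    destruct (stypm_submset (G1 k ++ G2 k) HD (HG k)) as (m' & Hm & HD').
    destruct (stypm_app_inv HD') as (Da & Db & ma & mb & Ha & Hb & HDab & ->).
    destruct (IH1 k Da ma Ha) as (n1' & Hn1 & H1).
    destruct (IH2 k Db mb Hb) as (n2' & Hn2 & H2).
    exists (n1' + n2'). split; [lia|]. econstructor; [exact H1|exact H2|].
    pose proof (env_drop_le k HG) as HG'. rewrite env_drop_union in HG'.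
    pose proof (env_shift_le k 0 HDab) as HS. rewrite env_shift_union in HS. env_lia.
Qed.

Lemma styp_subst k G t s n D u m : styp G t s n -> stypm D u (G k) m ->
  exists n', n' <= n + m /\
    styp (env_union (env_drop k G) (env_shift k 0 D)) (subst k u t) s n'.
Proof. intros H HD. exact (proj1 (styp_stypm_subst u) _ _ _ _ H k D m HD). Qed.

(** * Inversion of the typing rules *)

Lemma styp_Lam_inv G t A n : styp G (Lam t) A n ->
  exists M s n0, n = S n0 /\ ty_eqv (Arr M s) A /\ styp (env_ext M G) t s n0.
Proof.
  intro H. remember (Lam t) as v eqn:Hv. revert t Hv.
  induction H as [x0 s0 | G M t0 s n0 H0 _ | G0 D0 L0 t0 u0 r0 s0 As Mt Mu n1 n2 n3 |
                  G G' t0 A A' n0 H0 IH HG HA]; intros t Hv; try discriminate.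
  - injection Hv as <-. exists M, s, n0. auto using ty_eqv_refl.
  - destruct (IH t Hv) as (M & s & n1 & -> & HMs & H1).
    exists M, s, n1. split; [reflexivity|]. split; [exact (ty_eqv_trans HMs HA)|].
    apply (styp_weaken H1). apply env_ext_le; [lia|exact HG].
Qed.

Lemma styp_Lam_Arr_inv G t M s n : styp G (Lam t) (Arr M s) n ->
  exists n0, n = S n0 /\ styp (env_ext M G) t s n0.
Proof.
  intro H. destruct (styp_Lam_inv H) as (M0 & s0 & n0 & -> & HMs & H0).
  inversion HMs as [|M1 N M2 s1 s2 HP HF Hs]; subst.
  exists n0. split; [reflexivity|].
  apply (styp_sub H0); [|exact Hs].
  apply env_ext_le; [|apply env_le_refl].
  intro a. rewrite (mult_perm a HP), (mult_Forall2 a HF). lia.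
Qed.

(* The premises of the application rules typing [t(u, x.r)] with each element
   of [Rs], merged into one derivation per subterm; each element of [Rs] costs
   one application node. *)
Inductive App_premises (G : env) (t u r : tm) (Rs : mty) (n : nat) : Prop :=
| App_premises_intro Gt Gu Gr As Mt Mu nt nu nr :
    is_ch (arrows As) Mt -> stypm Gt t Mt nt ->
    is_ch (concat (map fst As)) Mu -> stypm Gu u Mu nu ->
    stypm (env_ext (map snd As) Gr) r Rs nr ->
    env_le (env_union Gt (env_union Gu Gr)) G ->
    nt + nu + nr + length Rs <= n ->
    App_premises G t u r Rs n.

Lemma styp_App_inv G t u r s n : styp G (App t u r) s n -> App_premises G t u r [s] n.
Proof.
  intro H. remember (App t u r) as v eqn:Hv. revert t u r Hv.
  induction H as [x0 s0 | G0 M0 t1 s1 n1 _ _ |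
                  G D L t0 u0 r0 s As Mt Mu n1 n2 n3 Hch1 Ht Hch2 Hu Hr _ |
                  G G' t0 s s' n0 _ IH HG Hs]; intros t u r Hv; try discriminate.
  - injection Hv as <- <- <-.
    econstructor; eauto using stypm_one, env_le_refl. simpl. lia.
  - destruct (IH t u r Hv) as [Gt Gu Gr As Mt Mu nt nu nr Hch1 Ht Hch2 Hu Hr Hle Hn].
    econstructor; eauto.
    + exact (stypm_one (styp_conv (stypm_one_inv Hr) Hs)).
    + env_lia.
Qed.

Lemma is_ch_nonnil X M : is_ch X M -> M <> [].
Proof. intros [[HX ->]|[_ [tau ->]]]; [exact HX|discriminate]. Qed.

Lemma stypm_ch_elim X M G t n : is_ch X M -> stypm G t M n ->
  exists k, k <= n /\ stypm G t X k.
Proof. intros [[_ ->]|[-> _]] H; [eauto|]. exists 0. split; [lia|constructor]. Qed.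

Lemma stypm_ch_app t X Y Mx My Gx Gy nx ny :
  is_ch X Mx -> stypm Gx t Mx nx -> is_ch Y My -> stypm Gy t My ny ->
  exists M n, is_ch (X ++ Y) M /\ stypm (env_union Gx Gy) t M n /\ n <= nx + ny.
Proof.
  intros [[HX ->]|[-> [tx ->]]] Hx [[HY ->]|[-> [ty ->]]] Hy.
  - exists (X ++ Y), (nx + ny). repeat split; [|apply stypm_app; auto|lia].
    left. split; [|reflexivity]. intro HXY. apply HX. exact (proj1 (app_eq_nil _ _ HXY)).
  - exists X, nx. rewrite app_nil_r. repeat split; [left; auto| |lia].
    apply (stypm_weaken Hx). env_lia.
  - exists Y, ny. repeat split; [left; auto| |lia].
    apply (stypm_weaken Hy). env_lia.
  - exists [tx], nx. repeat split; [right; eauto| |lia].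
    apply (stypm_weaken Hx). env_lia.
Qed.

Lemma stypm_App_inv G t u r Rs n : stypm G (App t u r) Rs n -> Rs <> [] ->
  App_premises G t u r Rs n.
Proof.
  revert G n. induction Rs as [|rho Rs IH]; intros G n H Hne; [congruence|].
  destruct (stypm_cons_inv H) as (G1 & G2 & n1 & n2 & H1 & H2 & Hle & ->).
  destruct (styp_App_inv H1) as [Gt Gu Gr As Mt Mu a b c Hch1 Ht Hch2 Hu Hr Hle1 Hn1].
  destruct Rs as [|rho' Rs].
  - econstructor; eauto; [env_lia|simpl in *; lia].
  - destruct (IH _ _ H2 ltac:(discriminate))
      as [Gt' Gu' Gr' Bs Mt' Mu' a' b' c' Hch1' Ht' Hch2' Hu' Hr' Hle2 Hn2].
    destruct (stypm_ch_app Hch1 Ht Hch1' Ht') as (M & ma & HchM & HtM & Hma).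
    destruct (stypm_ch_app Hch2 Hu Hch2' Hu') as (U & mb & HchU & HuU & Hmb).
    apply App_premises_intro with (env_union Gt Gt') (env_union Gu Gu') (env_union Gr Gr')
      (As ++ Bs) M U ma mb (c + c');
      unfold arrows in *; rewrite ?map_app, ?concat_app; auto.
    + rewrite <- env_union_ext. exact (stypm_app Hr Hr').
    + env_lia.
    + simpl in *. lia.
Qed.

(** * Subject reduction and strong normalization *)

Lemma stypm_beta t u As G D n1 n2 :
  stypm G (Lam t) (arrows As) n1 -> stypm D u (concat (map fst As)) n2 ->
  exists k, k <= n1 + n2 /\ stypm (env_union G D) (subst 0 u t) (map snd As) k.
Proof.
  revert G D n1 n2. induction As as [|[M tau] As IH]; intros G D n1 n2 Ht Hu; simpl in *.
  - exists 0. split; [lia|constructor].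
  - destruct (stypm_cons_inv Ht) as (Ga & Gb & na & nb & Ha & Hb & HG & ->).
    destruct (stypm_app_inv Hu) as (Da & Db & ma & mb & HDa & HDb & HD & ->).
    destruct (styp_Lam_Arr_inv Ha) as (na0 & -> & Hbody).
    destruct (styp_subst 0 Hbody HDa) as (n' & Hn' & Hs).
    rewrite env_drop_0_ext, env_shift_0 in Hs.
    destruct (IH _ _ _ _ Hb HDb) as (k & Hk & HE).
    exists (n' + k). split; [lia|]. econstructor; [exact Hs|exact HE|]. env_lia.
Qed.

Fixpoint tm_weight (t : tm) : nat :=
  match t with
  | Var _ => 1
  | Lam t => S (tm_weight t)
  | App t u r => 2 * tm_weight t + tm_weight u + tm_weight r
  end.

Lemma tm_weight_lift t : forall k c, tm_weight (lift k c t) = tm_weight t.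
Proof. induction t; intros; simpl; auto. destruct (n <? c); reflexivity. Qed.

Lemma tm_weight_pos t : 0 < tm_weight t.
Proof. induction t; simpl; lia. Qed.

Definition measure_lt (n' w' n w : nat) : Prop := n' < n \/ n' = n /\ w' < w.

Lemma stypm_step t t' :
  (forall G s n, styp G t s n ->
     exists n', styp G t' s n' /\ measure_lt n' (tm_weight t') n (tm_weight t)) ->
  forall M G n, stypm G t M n -> M <> [] ->
  exists n', stypm G t' M n' /\ measure_lt n' (tm_weight t') n (tm_weight t).
Proof.
  intros Hstep M. induction M as [|s M IH]; intros G n HM Hne; [congruence|].
  destruct (stypm_cons_inv HM) as (G1 & G2 & n1 & n2 & H1 & H2 & Hle & ->).
  destruct (Hstep _ _ _ H1) as (n1' & H1' & Hlt1).
  assert (Htail : exists n2', n2' <= n2 /\ stypm G2 t' M n2').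
  { destruct M as [|s' M].
    - exists 0. split; [lia|constructor].
    - destruct (IH _ _ H2 ltac:(discriminate)) as (n2' & H2' & Hlt2).
      exists n2'. split; [unfold measure_lt in Hlt2; lia|exact H2']. }
  destruct Htail as (n2' & Hn2 & H2').
  exists (n1' + n2'). split; [econstructor; eauto|]. unfold measure_lt in *. lia.
Qed.

Lemma styp_beta_reduct t u r G s n : styp G (App (Lam t) u r) s n ->
  exists n', n' < n /\ styp G (subst 0 (subst 0 u t) r) s n'.
Proof.
  intro HT.
  destruct (styp_App_inv HT) as [G1 D1 L1 As Mt Mu n1 n2 n3 Hch1 Ht Hch2 Hu Hr Hle Hn].
  destruct (stypm_ch_elim Hch1 Ht) as (k1 & Hk1 & Ht').
  destruct (stypm_ch_elim Hch2 Hu) as (k2 & Hk2 & Hu').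
  destruct (stypm_beta As Ht' Hu') as (k & Hk & Hsub).
  destruct (styp_subst 0 (stypm_one_inv Hr) Hsub) as (n' & Hn' & Hs).
  rewrite env_drop_0_ext, env_shift_0 in Hs.
  exists n'. split; [simpl in Hn; lia|]. apply (styp_weaken Hs). env_lia.
Qed.

Lemma styp_pi_reduct t u r u' r' G s n : styp G (App (App t u r) u' r') s n ->
  exists n', n' <= n /\ styp G (App t u (App r (lift 1 0 u') (lift 1 1 r'))) s n'.
Proof.
  intro HT.
  destruct (styp_App_inv HT) as [G1 D1 L1 As Mt Mu n1 n2 n3 Hch1 Ht Hch2 Hu Hr Hle Hn].
  destruct (stypm_App_inv Ht (is_ch_nonnil Hch1))
    as [Et Eu Er Bs Mt' Mu' a b c Hch1' Ht0 Hch2' Hu0 Hr0 Hle' Hn'].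
  pose proof (stypm_lift 1 0 Hu) as Hu'.
  rewrite env_shift_S_0, env_shift_0 in Hu'.
  pose proof (styp_lift 1 1 (stypm_one_inv Hr)) as Hr'.
  rewrite env_shift_ext, env_shift_S_0, env_shift_0 in Hr'.
  pose proof (styp_app As Hch1 Hr0 Hch2 Hu' Hr') as Hinner.
  rewrite !env_union_ext, app_nil_r in Hinner.
  exists (S (a + b + S (c + n2 + n3))). split.
  - assert (length Mt <> 0) by (rewrite length_zero_iff_nil; exact (is_ch_nonnil Hch1)).
    simpl in *. lia.
  - apply (styp_weaken (styp_app Bs Hch1' Ht0 Hch2' Hu0 Hinner)).
    env_lia.
Qed.

Lemma tm_weight_pi t u r u' r' :
  tm_weight (App t u (App r (lift 1 0 u') (lift 1 1 r'))) < tm_weight (App (App t u r) u' r').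
Proof. pose proof (tm_weight_pos t). simpl. rewrite !tm_weight_lift. lia. Qed.

Lemma styp_step t t' : step t t' -> forall G s n, styp G t s n ->
  exists n', styp G t' s n' /\ measure_lt n' (tm_weight t') n (tm_weight t).
Proof.
  induction 1 as [t u r | t u r u' r' | t t' _ IH |
                  t t' u r _ IH | t u u' r _ IH | t u r r' _ IH]; intros G s n HT.
  - destruct (styp_beta_reduct HT) as (n' & Hn' & H').
    exists n'. split; [exact H'|left; exact Hn'].
  - destruct (styp_pi_reduct HT) as (n' & Hn' & H').
    pose proof (tm_weight_pi t u r u' r').
    exists n'. split; [exact H'|unfold measure_lt; lia].
  - destruct (styp_Lam_inv HT) as (M & s0 & n0 & -> & HMs & Hbody).
    destruct (IH _ _ _ Hbody) as (n' & Hbody' & Hlt).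
    exists (S n'). split; [exact (styp_conv (styp_abs Hbody') HMs)|].
    unfold measure_lt in *. simpl. lia.
  - destruct (styp_App_inv HT) as [G1 D1 L1 As Mt Mu n1 n2 n3 Hch1 Ht Hch2 Hu Hr Hle Hn].
    destruct (stypm_step IH Ht (is_ch_nonnil Hch1)) as (n1' & Ht' & Hlt).
    exists (S (n1' + n2 + n3)). split.
    + apply (styp_weaken (styp_app As Hch1 Ht' Hch2 Hu (stypm_one_inv Hr))). exact Hle.
    + unfold measure_lt in *. simpl in *. lia.
  - destruct (styp_App_inv HT) as [G1 D1 L1 As Mt Mu n1 n2 n3 Hch1 Ht Hch2 Hu Hr Hle Hn].
    destruct (stypm_step IH Hu (is_ch_nonnil Hch2)) as (n2' & Hu' & Hlt).
    exists (S (n1 + n2' + n3)). split.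
    + apply (styp_weaken (styp_app As Hch1 Ht Hch2 Hu' (stypm_one_inv Hr))). exact Hle.
    + unfold measure_lt in *. simpl in *. lia.
  - destruct (styp_App_inv HT) as [G1 D1 L1 As Mt Mu n1 n2 n3 Hch1 Ht Hch2 Hu Hr Hle Hn].
    destruct (IH _ _ _ (stypm_one_inv Hr)) as (n3' & Hr' & Hlt).
    exists (S (n1 + n2 + n3')). split.
    + apply (styp_weaken (styp_app As Hch1 Ht Hch2 Hu Hr')).
      exact Hle.
    + unfold measure_lt in *. simpl in *. lia.
Qed.

Lemma Acc_of_measure_lt {A} (R : A -> A -> Prop) (weight : A -> nat) (P : A -> nat -> Prop) :
  (forall x y n, R y x -> P x n -> exists n', P y n' /\ measure_lt n' (weight y) n (weight x)) ->
  forall n x, P x n -> Acc R x.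
Proof.
  intros Hdec n. induction n as [n IHn] using lt_wf_ind.
  intro x. remember (weight x) as w eqn:Hw. revert x Hw.
  induction w as [w IHw] using lt_wf_ind. intros x -> Hx.
  constructor. intros y Hyx.
  destruct (Hdec _ _ _ Hyx Hx) as (n' & Hy & [Hlt | [-> Hlt]]).
  - exact (IHn n' Hlt y Hy).
  - exact (IHw _ Hlt y eq_refl Hy).
Qed.

Scheme typ_mut := Induction for typ Sort Prop
  with typm_mut := Induction for typm Sort Prop.
Combined Scheme typ_typm_ind from typ_mut, typm_mut.

Lemma typ_styp :
  (forall G t s, typ G t s -> exists n, styp G t s n) /\
  (forall G t M, typm G t M -> exists n, stypm G t M n).
Proof.
  apply typ_typm_ind.
  - intros x s. exists 1. constructor.
  - intros G M t s _ [n H]. exists (S n). constructor. exact H.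
  - intros G D L t u r s As Mt Mu Hch1 _ [n1 Ht] Hch2 _ [n2 Hu] _ [n3 Hr].
    exists (S (n1 + n2 + n3)). econstructor; eauto.
  - intros G G' t s s' _ [n H] HG Hs. exists n. exact (styp_sub H (env_eqv_le HG) Hs).
  - intros G t s _ [n H]. exists n. exact (stypm_one H).
  - intros G D t s M _ [n1 H1] _ [n2 H2]. exists (n1 + n2). econstructor; eauto. apply env_le_refl.
  - intros G G' t M M' _ [n H] HG HM.
    assert (HMM : forall a, mult a M' <= mult a M) by (intro a; rewrite (mty_eqv_mult HM a); lia).
    destruct (stypm_submset M' H HMM) as (n' & _ & H').
    exists n'. exact (stypm_weaken H' (env_eqv_le HG)).
Qed.

Unset Implicit Arguments.

Theorem mainTheorem16 : forall (t : tm) (G : env) (s : ty), typ G t s -> SN t.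
Proof.
  intros t G s Htyp.
  destruct (proj1 typ_styp _ _ _ Htyp) as [n Hn].
  apply (Acc_of_measure_lt _ tm_weight (fun t n => exists G s, styp G t s n)) with n.
  - intros t1 t2 n1 Hstep (G1 & s1 & H1).
    destruct (styp_step Hstep H1) as (n2 & H2 & Hlt). eauto.
  - eauto.
Qed.
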